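(* The linear space $\mathbb{R}_\mathcal{I}$ (with addition $\bar a+\bar b=\langle a_c+b_c;\,a_wb_w\rangle$ and scalar multiplication $k\bar a=\langle ka_c;\,a_w^{k}\rangle$) equipped with the inner product $\bar a\diamond\bar b=a_cb_c+\ln a_w\ln b_w$ is a Hilbert space; the induced norm is $\|\bar a\|=\sqrt{\bar a\diamond\bar a}=\sqrt{a_c^2+\ln^2 a_w}$.
   Context: An interval number is a closed interval $\bar a=[a_l,a_r]$ with $a_l,a_r\in\mathbb{R}$ and $a_l<a_r$ (real numbers are not regarded as degenerate intervals). $\mathbb{R}_\mathcal{I}$ denotes the set of all interval numbers. For $\bar a=[a_l,a_r]$ put $a_c=(a_l+a_r)/2$ and $a_w=(a_r-a_l)/2>0$, and write $\bar a=\langle a_c;a_w\rangle=[a_c-a_w,a_c+a_w]$. For $k\in\mathbb{R}$, $k\bar a=\langle ka_c;a_w^k\rangle$; the zero element is $\bar 0=\langle 0;1\rangle=[-1,1]$ and subtraction is $\bar a-\bar b=\langle a_c-b_c;a_w/b_w\rangle$. *)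

From Stdlib Require Import Reals Lra.
Open Scope R_scope.

Record interval : Type := MkInterval {
  il : R; ir : R; il_lt_ir : il < ir }.

Definition ac (a : interval) : R := (il a + ir a) / 2.
Definition aw (a : interval) : R := (ir a - il a) / 2.

(* <c; w> = [c - w, c + w] for w > 0 *)
Lemma cw_lt (c w : R) : 0 < w -> c - w < c + w.
Proof. intros; lra. Qed.
Definition mkcw (c w : R) (H : 0 < w) : interval :=
  MkInterval (c - w) (c + w) (cw_lt c w H).

Lemma aw_pos (a : interval) : 0 < aw a.
Proof. unfold aw; destruct a as [l r H]; simpl; lra. Qed.

Lemma mul_pos_lem (x y : R) : 0 < x -> 0 < y -> 0 < x * y.
Proof. intros; apply Rmult_lt_0_compat; assumption. Qed.

Definition iadd (a b : interval) : interval :=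
  mkcw (ac a + ac b) (aw a * aw b) (mul_pos_lem _ _ (aw_pos a) (aw_pos b)).

Lemma rpow_pos (x k : R) : 0 < Rpower x k.
Proof. unfold Rpower; apply exp_pos. Qed.

Definition iscal (k : R) (a : interval) : interval :=
  mkcw (k * ac a) (Rpower (aw a) k) (rpow_pos (aw a) k).

Definition izero : interval := mkcw 0 1 Rlt_0_1.

Definition idiamond (a b : interval) : R := ac a * ac b + ln (aw a) * ln (aw b).

Definition real_vector_space (V : Type) (zero : V) (add : V -> V -> V)
  (scal : R -> V -> V) : Prop :=
  (forall u v w, add u (add v w) = add (add u v) w) /\
  (forall u v, add u v = add v u) /\
  (forall u, add u zero = u) /\
  (forall u, exists v, add u v = zero) /\
  (forall (a b : R) u, scal a (scal b u) = scal (a * b) u) /\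
  (forall u, scal 1 u = u) /\
  (forall (a : R) u v, scal a (add u v) = add (scal a u) (scal a v)) /\
  (forall (a b : R) u, scal (a + b) u = add (scal a u) (scal b u)).

Definition inner_product (V : Type) (zero : V) (add : V -> V -> V)
  (scal : R -> V -> V) (ip : V -> V -> R) : Prop :=
  (forall u v, ip u v = ip v u) /\
  (forall u v w, ip (add u v) w = ip u w + ip v w) /\
  (forall (a : R) u v, ip (scal a u) v = a * ip u v) /\
  (forall u, 0 <= ip u u) /\
  (forall u, ip u u = 0 -> u = zero).

Definition ip_norm (V : Type) (ip : V -> V -> R) (u : V) : R := sqrt (ip u u).

Definition ip_complete (V : Type) (add : V -> V -> V)
  (scal : R -> V -> V) (ip : V -> V -> R) : Prop :=
  let d u v := ip_norm V ip (add u (scal (-1) v)) in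
  forall x : nat -> V,
    (forall eps, 0 < eps -> exists N, forall m n, (N <= m)%nat -> (N <= n)%nat ->
        d (x m) (x n) < eps) ->
    exists l : V, forall eps, 0 < eps -> exists N, forall n, (N <= n)%nat ->
        d (x n) l < eps.

Definition hilbert_space (V : Type) (zero : V) (add : V -> V -> V)
  (scal : R -> V -> V) (ip : V -> V -> R) : Prop :=
  real_vector_space V zero add scal /\
  inner_product V zero add scal ip /\
  ip_complete V add scal ip.

From Stdlib Require Import Reals.
From Stdlib Require Import Lra Lia ProofIrrelevance.
Open Scope R_scope.

(* The coordinates a |-> (a_c, ln a_w) identify R_I with R^2: they are a
   bijection that turns +, scalar multiplication and the diamond product into
   the Euclidean vector operations and dot product.  Every axiom is therefore
   an identity in R^2, and completeness is that of R, coordinatewise. *)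

Definition lw (a : interval) : R := ln (aw a).

Lemma ac_mkcw c w (Hw : 0 < w) : ac (mkcw c w Hw) = c.
Proof. unfold ac, mkcw; simpl; field. Qed.

Lemma aw_mkcw c w (Hw : 0 < w) : aw (mkcw c w Hw) = w.
Proof. unfold aw, mkcw; simpl; field. Qed.

Lemma interval_eq_coords (a b : interval) : ac a = ac b -> lw a = lw b -> a = b.
Proof.
  unfold lw; intros Hc Hl; apply ln_inv in Hl; try apply aw_pos.
  destruct a as [la ra Ha], b as [lb rb Hb]; unfold ac, aw in *; simpl in *.
  assert (la = lb) by lra; assert (ra = rb) by lra; subst.
  f_equal; apply proof_irrelevance.
Qed.

Definition of_coords (c l : R) : interval := mkcw c (exp l) (exp_pos l).

Lemma ac_of_coords c l : ac (of_coords c l) = c.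
Proof. apply ac_mkcw. Qed.

Lemma lw_of_coords c l : lw (of_coords c l) = l.
Proof. unfold lw, of_coords; rewrite aw_mkcw; apply ln_exp. Qed.

Lemma ac_iadd a b : ac (iadd a b) = ac a + ac b.
Proof. apply ac_mkcw. Qed.

Lemma lw_iadd a b : lw (iadd a b) = lw a + lw b.
Proof. unfold lw, iadd; rewrite aw_mkcw; apply ln_mult; apply aw_pos. Qed.

Lemma ac_iscal k a : ac (iscal k a) = k * ac a.
Proof. apply ac_mkcw. Qed.

Lemma lw_iscal k a : lw (iscal k a) = k * lw a.
Proof. unfold lw, iscal; rewrite aw_mkcw; unfold Rpower; rewrite ln_exp; ring. Qed.

Lemma ac_izero : ac izero = 0.
Proof. apply ac_mkcw. Qed.

Lemma lw_izero : lw izero = 0.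
Proof. unfold lw, izero; rewrite aw_mkcw; apply ln_1. Qed.

Lemma idiamond_coords a b : idiamond a b = ac a * ac b + lw a * lw b.
Proof. reflexivity. Qed.

Hint Rewrite ac_iadd lw_iadd ac_iscal lw_iscal ac_izero lw_izero : coords.

Ltac by_coords := apply interval_eq_coords; autorewrite with coords; ring.

Lemma interval_vector_space : real_vector_space interval izero iadd iscal.
Proof.
  repeat split; intros; try by_coords.
  exists (iscal (-1) u); by_coords.
Qed.

Lemma idiamond_inner_product : inner_product interval izero iadd iscal idiamond.
Proof.
  repeat split; intros *; rewrite ?idiamond_coords; autorewrite with coords.
  - ring.
  - ring.
  - ring.
  - nra.
  - intros Hu; apply interval_eq_coords; autorewrite with coords; nra.
Qed.

Lemma ip_norm_idiamond a : ip_norm interval idiamond a = sqrt (ac a ^ 2 + lw a ^ 2).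
Proof. unfold ip_norm; rewrite idiamond_coords; f_equal; ring. Qed.

Lemma idiamond_dist u v :
  ip_norm interval idiamond (iadd u (iscal (-1) v)) =
  sqrt ((ac u - ac v) ^ 2 + (lw u - lw v) ^ 2).
Proof. rewrite ip_norm_idiamond; autorewrite with coords; f_equal; ring. Qed.

Lemma Rabs_le_sqrt_sum_sq x y : Rabs x <= sqrt (x ^ 2 + y ^ 2).
Proof.
  rewrite <- sqrt_Rsqr_abs; apply sqrt_le_1_alt; unfold Rsqr; nra.
Qed.

Lemma sqrt_sum_sq_le_Rabs_add x y : sqrt (x ^ 2 + y ^ 2) <= Rabs x + Rabs y.
Proof.
  pose proof (Rabs_pos x); pose proof (Rabs_pos y).
  rewrite <- (Rabs_right (Rabs x + Rabs y)), <- sqrt_Rsqr_abs by lra.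
  apply sqrt_le_1_alt; rewrite Rsqr_plus, <- !Rsqr_abs; unfold Rsqr; nra.
Qed.

Lemma Cauchy_crit_dominated (f : nat -> R) (d : nat -> nat -> R) :
  (forall m n, Rabs (f m - f n) <= d m n) ->
  (forall eps, 0 < eps -> exists N, forall m n, (N <= m)%nat -> (N <= n)%nat ->
     d m n < eps) ->
  Cauchy_crit f.
Proof.
  intros Hfd Hd eps Heps; destruct (Hd eps Heps) as [N HN]; exists N.
  intros m n Hm Hn; unfold R_dist; eapply Rle_lt_trans; [apply Hfd | now apply HN].
Qed.

Lemma idiamond_complete : ip_complete interval iadd iscal idiamond.
Proof.
  unfold ip_complete; cbv zeta; intros x Hx.
  assert (Cc : Cauchy_crit (fun n => ac (x n))).
  { apply Cauchy_crit_dominated with (2 := Hx); intros m n.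
    rewrite idiamond_dist; apply Rabs_le_sqrt_sum_sq. }
  assert (Cl : Cauchy_crit (fun n => lw (x n))).
  { apply Cauchy_crit_dominated with (2 := Hx); intros m n.
    rewrite idiamond_dist, Rplus_comm; apply Rabs_le_sqrt_sum_sq. }
  destruct (R_complete _ Cc) as [c Hc], (R_complete _ Cl) as [l Hl].
  exists (of_coords c l); intros eps Heps.
  destruct (Hc (eps / 2)) as [Nc HNc], (Hl (eps / 2)) as [Nl HNl]; try lra.
  exists (max Nc Nl); intros n Hn.
  rewrite idiamond_dist, ac_of_coords, lw_of_coords.
  eapply Rle_lt_trans; [apply sqrt_sum_sq_le_Rabs_add |].
  specialize (HNc n ltac:(lia)); specialize (HNl n ltac:(lia)).
  unfold R_dist in *; lra.
Qed.

Theorem theorem2p54 :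
  hilbert_space interval izero iadd iscal idiamond /\
  (forall a : interval,
     ip_norm interval idiamond a = sqrt (ac a ^ 2 + ln (aw a) ^ 2)).
Proof.
  split.
  - exact (conj interval_vector_space (conj idiamond_inner_product idiamond_complete)).
  - exact ip_norm_idiamond.
Qed.
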